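(* Let $(|B(\lambda)\rangle,\mathcal{M})$ be an $N$-regular quantum scenario. For any $z_0,z_1\in\{0,1\}$, the linear system $\Psi_0(z_0)\cup\Psi_1(z_1)$ over $\mathbb{Z}_2$ is inconsistent if and only if $\bigoplus_{j=0}^{N-1}r(j,0,z_0)\neq\bigoplus_{j=0}^{N-1}r(j,1,z_1)$.
   Context: $\equiv$ is equality modulo $2\pi$; $\oplus$ is addition mod 2. For $\varphi\in\mathbb{R}$, $E_\varphi=\cos\varphi X+\sin\varphi Y$, with $+1$ eigenvector $|\varphi\rangle=\frac{1}{\sqrt2}(|0\rangle+e^{i\varphi}|1\rangle)$ and $-1$ eigenvector $|\varphi+\pi\rangle$; outcomes $+1,-1$ relabelled $0,1$; measurements identified with angles. A measurement scenario $\mathcal{M}=(M_1,M_2,M_3)$ consists of finite sets $M_i\subseteq[0,\pi)$ of angles for qubit $i$. For a three-qubit state $|\psi\rangle$, the event $(A,B,C)\to(a,b,c)$ is impossible if $(\langle A+a\pi|\otimes\langle B+b\pi|\otimes\langle C+c\pi|)|\psi\rangle=0$. For $\lambda\in[0,\frac{\pi}{2})$, $|v_\lambda\rangle=\cos\frac{\lambda}{2}|0\rangle+\sin\frac{\lambda}{2}|1\rangle$, $|w_\lambda\rangle=\sin\frac{\lambda}{2}|0\rangle+\cos\frac{\lambda}{2}|1\rangle$, $|B(\lambda)\rangle=\frac{1}{\sqrt2}(|00\rangle|v_\lambda\rangle+|11\rangle|w_\lambda\rangle)$. Define modulo $2\pi$: $\beta(\lambda,\varphi)=\varphi-2\arctan\left(\frac{\cos\frac{\lambda}{2}\sin\varphi}{\sin\frac{\lambda}{2}+\cos\frac{\lambda}{2}\cos\varphi}\right)$.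 For $|B(\lambda)\rangle$, the event $(A,B,C)\to(a,b,c)$ is impossible iff $A+B\equiv\beta(\lambda,C+c\pi)+(1\oplus a\oplus b)\pi$. $(|B(\lambda)\rangle,\mathcal{M})$ is maximally impossible if for every $C\in M_3$ and $z\in\{0,1\}$: every $A\in M_1$ admits $B\in M_2$, $a,b$ with $(A,B,C)\to(a,b,z)$ impossible, and every $B\in M_2$ admits $A\in M_1$, $a,b$ with $(A,B,C)\to(a,b,z)$ impossible. In that case $|M_1|=|M_2|=:N$; write $M_1=\{A_0,\dots,A_{N-1}\}$, $M_2=\{B_0,\dots,B_{N-1}\}$, $M_3=\{C_0,\dots,C_{n-1}\}$; for each $(j,l,z)$ there is a unique $k=:K(j,l,z)$ such that $A_j+B_k-\beta(\lambda,C_l+z\pi)$ is an integer multiple of $\pi$, and $r(j,l,z)\in\{0,1\}$ is defined by $A_j+B_{K(j,l,z)}-\beta(\lambda,C_l+z\pi)\equiv r(j,l,z)\pi$. $\Psi_l(z)$ denotes the system of $\mathbb{Z}_2$-linear equations $\{a_j\oplus b_{K(j,l,z)}=r(j,l,z):j=0,\dots,N-1\}$ in unknowns $a_0,\dots,a_{N-1},b_0,\dots,b_{N-1}$. With $n=2$, the scenario has maximal rank if for all $z_0,z_1$ the coefficient matrix of $\Psi_0(z_0)\cup\Psi_1(z_1)$ has rank $2N-1$ over $\mathbb{Z}_2$. The scenario is $N$-regular if it is maximally impossible and of maximal rank, with $|M_1|=|M_2|=N$ and $M_3=\{C_0,C_1\}$. *)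

From Stdlib Require Import Reals ZArith.
From Coquelicot Require Import Complex.
From mathcomp Require Import all_boot all_algebra.

Set Implicit Arguments.
Unset Strict Implicit.
Unset Printing Implicit Defensive.

Local Open Scope R_scope.

Definition eqm2pi (x y : R) : Prop := exists k : Z, x - y = 2 * IZR k * PI.

Definition int_mult_pi (x : R) : Prop := exists k : Z, x = IZR k * PI.

Definition bitR (b : bool) : R := if b then 1 else 0.

Definition expi (t : R) : C := (cos t, sin t).

(* coefficients of the bra <phi| = (1/sqrt2)(<0| + e^{-i phi} <1|) *)
Definition bra0 (phi : R) : C := RtoC (/ sqrt 2).
Definition bra1 (phi : R) : C := Cmult (expi (- phi)) (RtoC (/ sqrt 2)).

(* (<al| (x) <be| (x) <ga|) |B(lam)>, with
   |B(lam)> = (1/sqrt2)(|00>|v_lam> + |11>|w_lam>),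
   v_lam = cos(lam/2)|0> + sin(lam/2)|1>, w_lam = sin(lam/2)|0> + cos(lam/2)|1> *)
Definition amplitudeB (lam al be ga : R) : C :=
  Cmult (RtoC (/ sqrt 2))
   (Cplus
     (Cmult (Cmult (bra0 al) (bra0 be))
        (Cplus (Cmult (bra0 ga) (RtoC (cos (lam / 2))))
               (Cmult (bra1 ga) (RtoC (sin (lam / 2))))))
     (Cmult (Cmult (bra1 al) (bra1 be))
        (Cplus (Cmult (bra0 ga) (RtoC (sin (lam / 2))))
               (Cmult (bra1 ga) (RtoC (cos (lam / 2))))))).

Definition impossible (lam A B C : R) (a b c : bool) : Prop :=
  amplitudeB lam (A + bitR a * PI) (B + bitR b * PI) (C + bitR c * PI) = RtoC 0.

(* beta(lam, phi) = phi - 2 arctan( cos(lam/2) sin phi / (sin(lam/2) + cos(lam/2) cos phi) ),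
   read modulo 2 pi; when the denominator vanishes, 2 arctan(+-oo) = +-pi == pi (mod 2pi). *)
Definition beta (lam phi : R) : R :=
  let den := sin (lam / 2) + cos (lam / 2) * cos phi in
  if Req_EM_T den 0 then phi - PI
  else phi - 2 * atan (cos (lam / 2) * sin phi / den).

Definition max_impossible (N1 N2 n : nat) (lam : R)
  (A : 'I_N1 -> R) (B : 'I_N2 -> R) (C : 'I_n -> R) : Prop :=
  forall (l : 'I_n) (z : bool),
    (forall j, exists k a b, impossible lam (A j) (B k) (C l) a b z) /\
    (forall k, exists j a b, impossible lam (A j) (B k) (C l) a b z).

Definition is_K_r (N : nat) (lam : R) (A B : 'I_N -> R) (C : 'I_2 -> R)
  (K : 'I_N -> 'I_2 -> bool -> 'I_N) (r : 'I_N -> 'I_2 -> bool -> bool) : Prop :=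
  forall j l z,
    eqm2pi (A j + B (K j l z) - beta lam (C l + bitR z * PI)) (bitR (r j l z) * PI).

Local Close Scope R_scope.

Local Open Scope ring_scope.

(* Coefficient matrix of Psi_0(z0) u Psi_1(z1): rows 0..N-1 are the equations
   a_j + b_{K(j,0,z0)} of Psi_0(z0), rows N..2N-1 those of Psi_1(z1);
   columns 0..N-1 are the unknowns a_0..a_{N-1}, columns N..2N-1 are b_0..b_{N-1}. *)
Definition coefmx (N : nat) (K : 'I_N -> 'I_2 -> bool -> 'I_N) (z0 z1 : bool)
  : 'M['F_2]_(N + N, N + N) :=
  \matrix_(i, x)
    let: (j, l, z) := match split i with
                      | inl j => (j, (ord0 : 'I_2), z0)
                      | inr j => (j, (ord_max : 'I_2), z1) end in
    match split x with
    | inl j' => (j' == j)%:R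
    | inr k' => (k' == K j l z)%:R
    end.

Definition max_rank (N : nat) (K : 'I_N -> 'I_2 -> bool -> 'I_N) : Prop :=
  forall z0 z1 : bool, (\rank (coefmx K z0 z1)).+1 = (2 * N)%N.

Definition consistent (N : nat) (K : 'I_N -> 'I_2 -> bool -> 'I_N)
  (r : 'I_N -> 'I_2 -> bool -> bool) (z0 z1 : bool) : Prop :=
  exists a b : 'I_N -> bool,
    (forall j, addb (a j) (b (K j ord0 z0)) = r j ord0 z0) /\
    (forall j, addb (a j) (b (K j ord_max z1)) = r j ord_max z1).

Local Close Scope ring_scope.

(** Write the system [Psi_0(z0) u Psi_1(z1)] as [M x = r] over [Z_2].  The
    congruences defining [K] force [A_j - A_j'] to be a multiple of [pi] whenever
    [K(j,l,z) = K(j',l,z)], so [K(., l, z)] is injective because the [A_j] are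
    distinct angles in [[0, pi)].  Hence each [K(., l, z)] is a permutation, every unknown
    occurs in exactly two equations, and the all-ones vector lies in the left
    kernel of [M].  Summing the equations shows that a solution forces equal
    parities.  Conversely, maximal rank makes the left kernel exactly the line
    spanned by the all-ones vector, so the column space of [M] is the hyperplane
    of zero-sum vectors, which contains [r] as soon as the two parities agree. *)

From Stdlib Require Import Reals ZArith Lra Lia.
From Coquelicot Require Import Complex.
From mathcomp Require Import all_boot all_algebra.

Set Implicit Arguments.
Unset Strict Implicit.
Unset Printing Implicit Defensive.

Local Open Scope R_scope.

Lemma int_mult_pi_eqm2pi_bit x b : eqm2pi x (bitR b * PI) -> int_mult_pi x.
Proof.
case=> k Hk; rewrite /bitR in Hk.
case: b Hk => Hk; [exists (Z.add (Z.mul 2 k) 1) | exists (Z.mul 2 k)];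
  rewrite ?plus_IZR mult_IZR /=; lra.
Qed.

Lemma int_mult_piB x y : int_mult_pi x -> int_mult_pi y -> int_mult_pi (x - y).
Proof. by case=> m -> [n ->]; exists (Z.sub m n); rewrite minus_IZR; ring. Qed.

Lemma int_mult_pi_eq x y : 0 <= x < PI -> 0 <= y < PI -> int_mult_pi (x - y) -> x = y.
Proof.
move=> Hx Hy [k Hk].
have Hpi := PI_RGT_0.
have /lt_IZR Hk1 : -1 < IZR k by apply: (Rmult_lt_reg_r PI); lra.
have /lt_IZR Hk2 : IZR k < 1 by apply: (Rmult_lt_reg_r PI); lra.
have Hk0 : k = Z0 by lia.
by rewrite Hk0 /= in Hk; lra.
Qed.

Lemma is_K_r_injective N lam (A B : 'I_N -> R) (C : 'I_2 -> R) K r :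
  (forall j, 0 <= A j < PI) -> injective A -> is_K_r lam A B C K r ->
  forall l z, injective (fun j => K j l z).
Proof.
move=> HA Ainj HK l z j j' /= Hjj'; apply: Ainj.
apply: int_mult_pi_eq (HA j) (HA j') _.
set b := beta lam (C l + bitR z * PI).
have -> : A j - A j' = (A j + B (K j l z) - b) - (A j' + B (K j' l z) - b).
  by rewrite Hjj'; ring.
exact: int_mult_piB (int_mult_pi_eqm2pi_bit (HK j l z))
                    (int_mult_pi_eqm2pi_bit (HK j' l z)).
Qed.

Local Close Scope R_scope.

Import GRing.Theory.
Local Open Scope ring_scope.

Lemma split_lshift m n (i : 'I_m) : split (lshift n i) = inl i.
Proof. exact: (unsplitK (inl i)). Qed.

Lemma split_rshift m n (i : 'I_n) : split (rshift m i) = inr i.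
Proof. exact: (unsplitK (inr i)). Qed.

Lemma sum_mul_delta (R : pzSemiRingType) n (F : 'I_n -> R) j :
  \sum_(i < n) F i * (i == j)%:R = F j.
Proof.
rewrite (bigD1 j) //= eqxx mulr1 big1 ?addr0 // => i /negPf ->.
by rewrite mulr0.
Qed.

Lemma sum_delta (R : pzSemiRingType) n (j : 'I_n) :
  \sum_(i < n) (j == i)%:R = 1 :> R.
Proof.
by rewrite (bigD1 j) //= eqxx big1 ?addr0 // => i; rewrite eq_sym => /negPf ->.
Qed.

Lemma sub_tr_corank1 (F : fieldType) m n p (M : 'M[F]_(m, n)) (v : 'cV_m)
    (w : 'M_(p, m)) :
  v != 0 -> M^T *m v = 0 -> (\rank M).+1 = m -> (w <= M^T)%MS = (w *m v == 0).
Proof.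
move=> v_neq0 Mv0 rankM; rewrite -sub_kermx.
have sMv : (M^T <= kermx v)%MS by rewrite sub_kermx Mv0.
have rank_v : \rank v = 1%N.
  by apply/eqP; rewrite eqn_leq rank_leq_col lt0n mxrank_eq0.
have sKM : (kermx v <= M^T)%MS.
  have [_ <-] := mxrank_leqif_sup sMv.
  by rewrite mxrank_tr mxrank_ker rank_v -{2}rankM subn1.
by apply/idP/idP => [/submx_trans -> | /submx_trans ->].
Qed.

Definition b2F (b : bool) : 'F_2 := b%:R.

Lemma b2F_addb x y : b2F (x (+) y) = b2F x + b2F y.
Proof. by case: x; case: y; apply/eqP. Qed.

Lemma b2F_inj : injective b2F.
Proof. by do 2!case. Qed.

Lemma b2F_eq1 (x : 'F_2) : b2F (x == 1) = x.
Proof. by case: x => [[|[|]]] //= ?; apply/val_inj. Qed.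

Lemma b2F_big_addb n (F : 'I_n -> bool) :
  b2F (\big[addb/false]_(j < n) F j) = \sum_(j < n) b2F (F j).
Proof. exact: (big_morph b2F b2F_addb). Qed.

Section CoefficientMatrix.

Variables (N : nat) (K : 'I_N -> 'I_2 -> bool -> 'I_N).
Variables (r : 'I_N -> 'I_2 -> bool -> bool) (z0 z1 : bool).

Local Notation M := (coefmx K z0 z1).

Lemma coefmx_lshift j x : M (lshift N j) x =
  match split x with inl j' => (j' == j)%:R | inr k => (k == K j ord0 z0)%:R end.
Proof. by rewrite mxE split_lshift. Qed.

Lemma coefmx_rshift j x : M (rshift N j) x =
  match split x with inl j' => (j' == j)%:R | inr k => (k == K j ord_max z1)%:R end.
Proof. by rewrite mxE split_rshift. Qed.

Lemma mul_coefmx_tr_lshift (u : 'rV_(N + N)) j :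
  (u *m M^T) 0 (lshift N j) = u 0 (lshift N j) + u 0 (rshift N (K j ord0 z0)).
Proof.
rewrite mxE big_split_ord /=.
under eq_bigr do rewrite mxE coefmx_lshift split_lshift.
under [X in _ + X]eq_bigr do rewrite mxE coefmx_lshift split_rshift.
by rewrite !sum_mul_delta.
Qed.

Lemma mul_coefmx_tr_rshift (u : 'rV_(N + N)) j :
  (u *m M^T) 0 (rshift N j) = u 0 (lshift N j) + u 0 (rshift N (K j ord_max z1)).
Proof.
rewrite mxE big_split_ord /=.
under eq_bigr do rewrite mxE coefmx_rshift split_lshift.
under [X in _ + X]eq_bigr do rewrite mxE coefmx_rshift split_rshift.
by rewrite !sum_mul_delta.
Qed.

Hypothesis K_inj : forall l z, injective (fun j => K j l z).

Lemma big_reindexK (T : Type) (idx : T) (op : Monoid.com_law idx) l z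
    (G : 'I_N -> T) :
  \big[op/idx]_(j < N) G (K j l z) = \big[op/idx]_(j < N) G j.
Proof. by rewrite [RHS](reindex_inj (@K_inj l z)). Qed.

Lemma coefmx_tr_mul_ones : M^T *m (const_mx 1 : 'cV_(N + N)) = 0.
Proof.
apply/matrixP => x i; rewrite [RHS]mxE mxE big_split_ord /=.
under eq_bigr do rewrite [const_mx _ _ _]mxE mulr1 [M^T _ _]mxE coefmx_lshift.
under [X in _ + X]eq_bigr do rewrite [const_mx _ _ _]mxE mulr1 [M^T _ _]mxE coefmx_rshift.
case: (split x) => [j | k]; last first.
  rewrite (big_reindexK _ ord0 z0 (fun i => (k == i)%:R)).
  rewrite (big_reindexK _ ord_max z1 (fun i => (k == i)%:R)).
  by rewrite sum_delta; apply/eqP.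
by rewrite sum_delta; apply/eqP.
Qed.

Local Notation parity l z := (\big[addb/false]_(j < N) r j l z).

Lemma consistent_parity :
  consistent K r z0 z1 -> parity ord0 z0 = parity ord_max z1.
Proof.
case=> a [b [Ha Hb]].
rewrite -(eq_bigr _ (fun j _ => Ha j)) -(eq_bigr _ (fun j _ => Hb j)).
by rewrite !big_split /= !big_reindexK.
Qed.

Definition rhs_row : 'rV['F_2]_(N + N) :=
  row_mx (\row_j b2F (r j ord0 z0)) (\row_j b2F (r j ord_max z1)).

Lemma rhs_row_mul_ones :
  rhs_row *m const_mx 1 =
  const_mx (n := 1) (b2F (parity ord0 z0 (+) parity ord_max z1)).
Proof.
apply/matrixP => i i'; rewrite !ord1 /rhs_row -col_mx_const mul_row_col !mxE.
rewrite b2F_addb !b2F_big_addb.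
by congr (_ + _); apply: eq_bigr => j _; rewrite !mxE mulr1.
Qed.

Lemma consistent_of_mul_coefmx_tr (u : 'rV_(N + N)) :
  u *m M^T = rhs_row -> consistent K r z0 z1.
Proof.
move=> Hu; exists (fun j => u 0 (lshift N j) == 1), (fun k => u 0 (rshift N k) == 1).
split=> j; apply: b2F_inj; rewrite b2F_addb !b2F_eq1.
  by rewrite -mul_coefmx_tr_lshift Hu row_mxEl mxE.
by rewrite -mul_coefmx_tr_rshift Hu row_mxEr mxE.
Qed.

Lemma parity_consistent :
  max_rank K -> parity ord0 z0 = parity ord_max z1 -> consistent K r z0 z1.
Proof.
move=> rankM parity_eq.
have rank_coefmx : (\rank M).+1 = (N + N)%N by rewrite rankM mul2n addnn.
have N2_gt0 : (0 < N + N)%N by rewrite -rank_coefmx.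
have ones_neq0 : const_mx 1 != 0 :> 'cV['F_2]_(N + N).
  apply/eqP => /matrixP/(_ (Ordinal N2_gt0) 0).
  by rewrite !mxE; apply/eqP; rewrite oner_eq0.
have : (rhs_row <= M^T)%MS.
  rewrite (sub_tr_corank1 _ ones_neq0 coefmx_tr_mul_ones rank_coefmx).
  by rewrite rhs_row_mul_ones parity_eq addbb.
by case/submxP => u /esym; exact: consistent_of_mul_coefmx_tr.
Qed.

End CoefficientMatrix.

Theorem lemma16 (N : nat) (lam : R)
  (A B : 'I_N -> R) (C : 'I_2 -> R)
  (K : 'I_N -> 'I_2 -> bool -> 'I_N) (r : 'I_N -> 'I_2 -> bool -> bool) :
  Rle 0 lam /\ Rlt lam (Rdiv PI 2) ->
  (forall j, Rle 0 (A j) /\ Rlt (A j) PI) ->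
  (forall k, Rle 0 (B k) /\ Rlt (B k) PI) ->
  (forall l, Rle 0 (C l) /\ Rlt (C l) PI) ->
  injective A -> injective B -> injective C ->
  (* N-regular: maximally impossible and of maximal rank *)
  max_impossible lam A B C ->
  is_K_r lam A B C K r ->
  max_rank K ->
  forall z0 z1 : bool,
    ~ consistent K r z0 z1 <->
    \big[addb/false]_(j < N) r j ord0 z0 != \big[addb/false]_(j < N) r j ord_max z1.
Proof.
move=> _ HA _ _ Ainj _ _ _ HK rankM z0 z1.
have K_inj := is_K_r_injective HA Ainj HK.
split=> [Hnc | /eqP Hne Hc].
  by apply/eqP => /(parity_consistent K_inj rankM).
exact: Hne (consistent_parity K_inj Hc).
Qed.
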